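(* Let $\nu_0=0$ and $s,\gamma,u>0$. Let $y(t;y_0)$ be the solution of $\dot y=F(y)$, $y(0)=y_0\in[0,1]$, where $F(y)=-y(1-y)[s+\gamma(1-y)]+u(1-y)$, and set $y_\infty(y_0)=\lim_{t\to\infty}y(t;y_0)$. (i) If $0<u<s$, or if $u=s$ and $s<\gamma$, then $y_\infty(y_0)=\bar y_2$ for $y_0\in[0,1)$ and $y_\infty(1)=\bar y_1$. (ii) If $s<\gamma$ and $s<u\le\check u$, then $y_\infty(y_0)=\bar y_2$ for $y_0\in[0,\bar y_3)$, $y_\infty(\bar y_3)=\bar y_3$, and $y_\infty(y_0)=\bar y_1$ for $y_0\in(\bar y_3,\bar y_1]$. (iii) If $u>\check u$, or if $s\ge\gamma$ and $s\le u\le\check u$, then $y_\infty(y_0)=\bar y_1$ for all $y_0\in[0,1]$.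
   Context: Here $\check u=\frac1\gamma\big(\frac{s+\gamma}2\big)^2$, $\bar y_1=1$, $\sigma=(1+s/\gamma)^2-4u/\gamma$, and, whenever $\sigma\ge 0$, $\bar y_2=\frac12(1+\frac s\gamma-\sqrt\sigma)$ and $\bar y_3=\frac12(1+\frac s\gamma+\sqrt\sigma)$. The limit $y_\infty(y_0)$ exists because $t\mapsto y(t;y_0)$ is monotone. *)

From Stdlib Require Import Reals.
From Coquelicot Require Import Coquelicot.
Open Scope R_scope.

Definition Fvec (s gamma u y : R) : R :=
  - y * (1 - y) * (s + gamma * (1 - y)) + u * (1 - y).

Definition ucheck (s gamma : R) : R := / gamma * ((s + gamma) / 2) ^ 2.
Definition ybar1 : R := 1.
Definition sigma (s gamma u : R) : R := (1 + s / gamma) ^ 2 - 4 * u / gamma.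
Definition ybar2 (s gamma u : R) : R := / 2 * (1 + s / gamma - sqrt (sigma s gamma u)).
Definition ybar3 (s gamma u : R) : R := / 2 * (1 + s / gamma + sqrt (sigma s gamma u)).

Definition is_solution (s gamma u y0 : R) (y : R -> R) : Prop :=
  y 0 = y0 /\
  filterlim y (at_right 0) (locally y0) /\
  (forall t, 0 < t -> is_derive y t (Fvec s gamma u (y t))).

Definition has_yinf (y : R -> R) (l : R) : Prop := is_lim y p_infty l.

(* The field factors as F(y) = (1 - y) Q(y) with Q(y) = gamma y^2 - (s + gamma) y + u,
   and Q(y) = gamma (y - ybar2) (y - ybar3) once sigma >= 0.  Since Q(1) = u - s, the
   point 1 lies between ybar2 and ybar3 when u <= s, and above both when s < u and
   s < gamma (their sum is 1 + s/gamma < 2); in the remaining regime Q > 0 below 1.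
   At each zero e one has F(x) = (x - e) q(x) with q continuous, so Gronwall's
   inequality for y - e shows that a solution can neither reach nor leave e.  A
   solution therefore stays between the two zeros enclosing y0, is monotone there,
   and converges to the zero towards which F points. *)

From Pilot Require Import Defs.
From Stdlib Require Import Reals Lra Psatz.
From Coquelicot Require Import Coquelicot.
Open Scope R_scope.

Definition is_sol (f : R -> R) (y0 : R) (y : R -> R) : Prop :=
  y 0 = y0 /\
  filterlim y (at_right 0) (locally y0) /\
  (forall t, 0 < t -> is_derive y t (f (y t))).

(* Zeros of [f] through which no solution can pass: [f] has a continuous
   divided difference there (e.g. any zero of a polynomial). *)
Definition regular_zero (f : R -> R) (e : R) : Prop :=
  exists q : R -> R, (forall x, continuity_pt q x) /\ forall x, f x = (x - e) * q x.

Lemma regular_zero_continuity f e : regular_zero f e -> forall x, continuity_pt f x.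
Proof.
  intros [q [Hq Hf]] x.
  apply continuity_pt_ext with (fun x => (x - e) * q x); [intros; now rewrite Hf |].
  apply continuity_pt_mult; [reg | apply Hq].
Qed.

(* A solution is only right-continuous at [0]; extending it by [y 0] to the
   left makes it continuous everywhere, as [MVT_gen] and [IVT_gen] require. *)
Definition extend0 (y : R -> R) (t : R) : R := if Rle_dec 0 t then y t else y 0.

Lemma extend0_nonneg y t : 0 <= t -> extend0 y t = y t.
Proof. intros Ht; unfold extend0; destruct Rle_dec; [reflexivity | lra]. Qed.

Lemma extend0_locally y t : 0 < t -> locally t (fun s => y s = extend0 y s).
Proof.
  intros Ht; exists (mkposreal t Ht); intros s Hs.
  change (Rabs (s - t) < t) in Hs; apply Rabs_def2 in Hs.
  rewrite extend0_nonneg; [reflexivity | lra].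
Qed.

Lemma weighted_square_MVT (h p : R -> R) k T : 0 < T ->
  (forall x, 0 < x < T -> is_derive h x (h x * p x)) ->
  (forall x, 0 <= x <= T -> continuity_pt h x) ->
  exists c, 0 <= c <= T /\
    h T ^ 2 * exp (k * T) - h 0 ^ 2 = exp (k * c) * h c ^ 2 * (2 * p c + k) * T.
Proof.
  intros HT Hd Hc.
  destruct (MVT_gen (fun t => h t ^ 2 * exp (k * t)) 0 T
              (fun t => exp (k * t) * h t ^ 2 * (2 * p t + k))) as [c [Hc0 Hw]].
  - intros x Hx; rewrite Rmin_left, Rmax_right in Hx by lra.
    specialize (Hd x Hx).
    auto_derive; [now exists (h x * p x) |].
    change (fun x0 : R => h x0) with h.
    rewrite (is_derive_unique _ _ _ Hd); ring.
  - intros x Hx; rewrite Rmin_left, Rmax_right in Hx by lra.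
    apply continuity_pt_mult.
    + apply (continuity_pt_comp h (fun z => z ^ 2)); [apply Hc; lra | reg].
    + apply (continuity_pt_comp (fun t => k * t) exp); [reg |].
      apply derivable_continuous_pt, derivable_pt_exp.
  - rewrite Rmin_left, Rmax_right in Hc0 by lra.
    exists c; split; [exact Hc0 |].
    rewrite Rmult_0_r, exp_0, Rmult_1_r in Hw; lra.
Qed.

(* Grönwall: with [|p| <= L], the square [h^2] is nondecreasing under the weight
   [exp (2 L t)] and nonincreasing under [exp (-2 L t)]. *)
Lemma linear_ode_zero_iff (h p : R -> R) L T : 0 < T ->
  (forall x, 0 < x < T -> is_derive h x (h x * p x)) ->
  (forall x, 0 <= x <= T -> continuity_pt h x) ->
  (forall x, 0 <= x <= T -> Rabs (p x) <= L) ->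
  h T = 0 <-> h 0 = 0.
Proof.
  intros HT Hd Hc Hp; split; intros Hz.
  - destruct (weighted_square_MVT h p (2 * L) T HT Hd Hc) as [c [Hc0 Hw]].
    specialize (Hp c Hc0); apply Rabs_le_between in Hp.
    assert (0 <= exp (2 * L * c) * h c ^ 2 * (2 * p c + 2 * L) * T).
    { pose proof (exp_pos (2 * L * c)); pose proof (pow2_ge_0 (h c)).
      apply Rmult_le_pos; [apply Rmult_le_pos; [apply Rmult_le_pos |] |]; lra. }
    rewrite Hz in Hw; nra.
  - destruct (weighted_square_MVT h p (- 2 * L) T HT Hd Hc) as [c [Hc0 Hw]].
    specialize (Hp c Hc0); apply Rabs_le_between in Hp.
    assert (0 <= exp (- 2 * L * c) * h c ^ 2 * (L - p c) * T).
    { pose proof (exp_pos (- 2 * L * c)); pose proof (pow2_ge_0 (h c)).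
      apply Rmult_le_pos; [apply Rmult_le_pos; [apply Rmult_le_pos |] |]; lra. }
    pose proof (exp_pos (- 2 * L * T)).
    assert (h T ^ 2 * exp (- 2 * L * T) <= 0) by (rewrite Hz in Hw; nra).
    assert (h T ^ 2 <= 0) by nra.
    nra.
Qed.

Section Solution.

Variables (f : R -> R) (y0 : R) (y : R -> R).
Hypothesis y_sol : is_sol f y0 y.

Lemma sol_init : y 0 = y0.
Proof. apply y_sol. Qed.

Lemma is_derive_extend0 t : 0 < t -> is_derive (extend0 y) t (f (extend0 y t)).
Proof.
  intros Ht; rewrite extend0_nonneg by lra.
  apply is_derive_ext_loc with y; [now apply extend0_locally | now apply y_sol].
Qed.

Lemma continuity_extend0 : continuity (extend0 y).
Proof.
  destruct y_sol as [H0 [Hr Hd]].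
  intros c; apply continuity_pt_filterlim.
  destruct (Rtotal_order c 0) as [Hc | [-> | Hc]].
  - apply filterlim_ext_loc with (fun _ => y 0).
    + exists (mkposreal (- c) ltac:(lra)); intros s Hs.
      change (Rabs (s - c) < - c) in Hs; apply Rabs_def2 in Hs.
      unfold extend0; destruct Rle_dec; [lra | reflexivity].
    + unfold extend0; destruct Rle_dec; [lra | apply filterlim_const].
  - rewrite extend0_nonneg, H0 by lra.
    apply filterlim_locally; intros eps.
    destruct (proj1 (filterlim_locally y y0) Hr eps) as [d Hd'].
    exists d; intros x Hx.
    unfold extend0; destruct Rle_dec as [Hx0 | Hx0].
    + destruct (Req_dec x 0) as [-> | Hn]; [rewrite H0; apply ball_center |].
      apply Hd'; [exact Hx | lra].
    + rewrite H0; apply ball_center.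
  - apply filterlim_ext_loc with y; [now apply extend0_locally |].
    rewrite extend0_nonneg by lra.
    apply (ex_derive_continuous y c); eexists; now apply Hd.
Qed.

Lemma sol_MVT t1 t2 : 0 <= t1 < t2 ->
  exists c, t1 <= c <= t2 /\ y t2 - y t1 = f (y c) * (t2 - t1).
Proof.
  intros Ht.
  destruct (MVT_gen (extend0 y) t1 t2 (fun c => f (extend0 y c))) as [c [Hc Hw]].
  - intros x Hx; rewrite Rmin_left, Rmax_right in Hx by lra.
    apply is_derive_extend0; lra.
  - intros x _; apply continuity_extend0.
  - rewrite Rmin_left, Rmax_right in Hc by lra.
    rewrite !extend0_nonneg in Hw by lra.
    now exists c.
Qed.

Lemma sol_IVT t e : 0 <= t -> Rmin y0 (y t) <= e <= Rmax y0 (y t) ->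
  exists c, 0 <= c <= t /\ y c = e.
Proof.
  intros Ht He.
  rewrite <- sol_init, <- (extend0_nonneg y 0), <- (extend0_nonneg y t) in He by lra.
  destruct (IVT_gen (extend0 y) 0 t e continuity_extend0 He) as [c [Hc Hyc]].
  rewrite Rmin_left, Rmax_right in Hc by lra.
  rewrite extend0_nonneg in Hyc by lra.
  now exists c.
Qed.

Lemma sol_nondecreasing t1 t2 : (forall t, 0 <= t -> 0 <= f (y t)) ->
  0 <= t1 <= t2 -> y t1 <= y t2.
Proof.
  intros Hf Ht; destruct (Req_dec t1 t2) as [-> | Hn]; [lra |].
  destruct (sol_MVT t1 t2) as [c [Hc Hw]]; [lra |].
  specialize (Hf c ltac:(lra)); nra.
Qed.

Section RegularZero.

Variable e : R.
Hypothesis e_zero : regular_zero f e.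

Lemma sol_eq_zero_iff t : 0 <= t -> y t = e <-> y0 = e.
Proof.
  intros Ht; destruct (Req_dec t 0) as [-> | Ht0]; [now rewrite sol_init |].
  destruct e_zero as [q [Hq Hf]].
  set (p t := q (extend0 y t)).
  assert (Hp : forall t, continuity_pt p t).
  { intros s; apply (continuity_pt_comp (extend0 y) q); [apply continuity_extend0 | apply Hq]. }
  destruct (continuity_ab_maj (fun s => Rabs (p s)) 0 t) as [M [HM _]]; [lra | |].
  { intros c _; apply (continuity_pt_comp p Rabs); [apply Hp | apply Rcontinuity_abs]. }
  assert (Hiff : extend0 y t - e = 0 <-> extend0 y 0 - e = 0).
  { apply (linear_ode_zero_iff (fun s => extend0 y s - e) p (Rabs (p M)) t);
      [lra | | | exact HM].
    - intros x Hx; pose proof (is_derive_extend0 x ltac:(lra)) as Hd.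
      auto_derive; [now exists (f (extend0 y x)) |].
      change (fun x0 : R => extend0 y x0) with (extend0 y).
      rewrite (is_derive_unique _ _ _ Hd), Hf; unfold p; ring.
    - intros x _; apply continuity_pt_minus;
        [apply continuity_extend0 | apply continuity_pt_const; now intros a b]. }
  rewrite !extend0_nonneg, sol_init in Hiff by lra; lra.
Qed.

Lemma sol_lt_zero : y0 < e -> forall t, 0 <= t -> y t < e.
Proof.
  intros He t Ht; destruct (Rlt_dec (y t) e) as [| Hn]; [assumption | exfalso].
  destruct (sol_IVT t e Ht) as [c [Hc Hyc]];
    [rewrite Rmin_left, Rmax_right; lra |].
  apply (sol_eq_zero_iff c) in Hyc; lra.
Qed.

Lemma sol_gt_zero : e < y0 -> forall t, 0 <= t -> e < y t.
Proof.
  intros He t Ht; destruct (Rlt_dec e (y t)) as [| Hn]; [assumption | exfalso].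
  destruct (sol_IVT t e Ht) as [c [Hc Hyc]];
    [rewrite Rmin_right, Rmax_left; lra |].
  apply (sol_eq_zero_iff c) in Hyc; lra.
Qed.

Lemma is_lim_sol_zero : y0 = e -> is_lim y p_infty e.
Proof.
  intros He; apply is_lim_spec; intros eps; exists 0; intros t Ht.
  rewrite (proj2 (sol_eq_zero_iff t ltac:(lra)) He), Rminus_eq_0, Rabs_R0.
  apply cond_pos.
Qed.

End RegularZero.

Lemma is_lim_sol_trapped_up a b : (forall x, continuity_pt f x) ->
  (forall t, 0 <= t -> a < y t < b) -> (forall x, a < x < b -> 0 < f x) ->
  is_lim y p_infty b.
Proof.
  intros Hfc Hin Hpos.
  assert (Hmono : forall t1 t2, 0 <= t1 <= t2 -> y t1 <= y t2).
  { intros t1 t2; apply sol_nondecreasing; intros t Ht; now apply Rlt_le, Hpos, Hin. }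
  assert (Hy0 := Hin 0 (Rle_refl 0)); rewrite sol_init in Hy0.
  apply is_lim_spec; intros eps; simpl.
  destruct (Rlt_dec (b - eps) y0) as [Hl | Hl].
  { exists 0; intros t Ht.
    assert (y0 <= y t) by (rewrite <- sol_init; apply Hmono; lra).
    specialize (Hin t ltac:(lra)); apply Rabs_def1; lra. }
  destruct (continuity_ab_min f y0 (b - eps)) as [m [Hm Hm0]];
    [lra | intros; apply Hfc |].
  assert (Hfm : 0 < f m) by (pose proof (cond_pos eps); apply Hpos; lra).
  set (T := (b - y0) / f m).
  assert (HT : 0 < T) by (apply Rdiv_lt_0_compat; lra).
  (* Until [y] passes [b - eps] it climbs at speed at least [f m]. *)
  assert (HyT : b - eps < y T).
  { destruct (Rlt_dec (b - eps) (y T)) as [| Hn]; [assumption | exfalso].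
    destruct (sol_MVT 0 T) as [c [Hc Hw]]; [lra |].
    rewrite sol_init in Hw.
    assert (y0 <= y c <= y T) by (rewrite <- sol_init; split; apply Hmono; lra).
    assert (f m <= f (y c)) by (apply Hm; lra).
    assert (f m * T = b - y0) by (unfold T; field; lra).
    specialize (Hin T ltac:(lra)); nra. }
  exists T; intros t Ht.
  assert (y T <= y t) by (apply Hmono; lra).
  specialize (Hin t ltac:(lra)); apply Rabs_def1; lra.
Qed.

Lemma is_lim_sol_up a b : regular_zero f a -> regular_zero f b ->
  (forall x, a < x < b -> 0 < f x) -> a < y0 <= b -> is_lim y p_infty b.
Proof.
  intros Ha Hb Hpos Hy0.
  destruct (Req_dec y0 b) as [He | Hn]; [now apply (is_lim_sol_zero b) |].
  apply (is_lim_sol_trapped_up a b); [now apply regular_zero_continuity with b | | exact Hpos].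
  intros t Ht; split; [apply (sol_gt_zero a) | apply (sol_lt_zero b)]; auto; lra.
Qed.

Lemma is_lim_sol_up_from_below b : regular_zero f b ->
  (forall x, x < b -> 0 < f x) -> y0 <= b -> is_lim y p_infty b.
Proof.
  intros Hb Hpos Hy0.
  destruct (Req_dec y0 b) as [He | Hn]; [now apply (is_lim_sol_zero b) |].
  assert (Hlt := sol_lt_zero b Hb ltac:(lra)).
  assert (Hge : forall t, 0 <= t -> y0 <= y t).
  { intros t Ht; rewrite <- sol_init.
    apply sol_nondecreasing; [| lra].
    intros s Hs; now apply Rlt_le, Hpos, Hlt. }
  apply (is_lim_sol_trapped_up (y0 - 1) b); [now apply regular_zero_continuity with b | |].
  - intros t Ht; specialize (Hge t Ht); specialize (Hlt t Ht); lra.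
  - intros x Hx; apply Hpos; lra.
Qed.

End Solution.

Lemma is_sol_opp f y0 y : is_sol f y0 y ->
  is_sol (fun x => - f (- x)) (- y0) (fun t => - y t).
Proof.
  intros [H0 [Hl Hd]]; split; [| split].
  - now rewrite H0.
  - apply filterlim_comp with (G := locally y0); [exact Hl |].
    apply (filterlim_opp (V := R_NormedModule)).
  - intros t Ht; rewrite Ropp_involutive.
    apply (is_derive_opp (V := R_NormedModule)); now apply Hd.
Qed.

Lemma regular_zero_opp f e : regular_zero f e -> regular_zero (fun x => - f (- x)) (- e).
Proof.
  intros [q [Hq Hf]]; exists (fun x => q (- x)); split.
  - intros x; apply (continuity_pt_comp Ropp q); [reg | apply Hq].
  - intros x; rewrite Hf; ring.
Qed.

Lemma is_lim_sol_down f y0 y : is_sol f y0 y -> forall a b,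
  regular_zero f a -> regular_zero f b ->
  (forall x, a < x < b -> f x < 0) -> a <= y0 < b -> is_lim y p_infty a.
Proof.
  intros Hs a b Ha Hb Hneg Hy0.
  apply is_lim_ext with (fun t => - - y t); [intros; ring |].
  replace (Finite a) with (Rbar_opp (- a)) by (simpl; f_equal; ring).
  apply is_lim_opp, (is_lim_sol_up _ _ _ (is_sol_opp f y0 y Hs) (- b) (- a));
    try now apply regular_zero_opp.
  - intros x Hx; assert (f (- x) < 0) by (apply Hneg; lra); lra.
  - lra.
Qed.

Lemma Fvec_regular_zero s g u e : Fvec s g u e = 0 -> regular_zero (Fvec s g u) e.
Proof.
  intros He.
  exists (fun x => - g * (x * x + x * e + e * e) + (2 * g + s) * (x + e) - (s + g + u)).
  split; [intros x; reg |].
  intros x; transitivity (Fvec s g u x - Fvec s g u e); [lra |].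
  unfold Fvec; ring.
Qed.

Lemma Fvec_quadratic s g u x : Fvec s g u x = (1 - x) * (g * x ^ 2 - (s + g) * x + u).
Proof. unfold Fvec; ring. Qed.

(* Qualified because Stdlib's [Reals] also exports a [sigma]. *)
Lemma sigma_ucheck s g u : 0 < g -> Defs.sigma s g u = 4 / g * (ucheck s g - u).
Proof. intros Hg; unfold Defs.sigma, ucheck; field; lra. Qed.

Lemma quadratic_ybar s g u x : 0 < g -> 0 <= Defs.sigma s g u ->
  g * x ^ 2 - (s + g) * x + u = g * (x - ybar2 s g u) * (x - ybar3 s g u).
Proof.
  intros Hg Hsig; assert (Hr := pow2_sqrt _ Hsig).
  unfold ybar2, ybar3; set (r := sqrt (Defs.sigma s g u)) in *.
  transitivity (g * ((x - (1 + s / g) / 2) ^ 2 - r ^ 2 / 4)); [| field; lra].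
  rewrite Hr; unfold Defs.sigma; field; lra.
Qed.

Lemma ybar2_le_ybar3 s g u : ybar2 s g u <= ybar3 s g u.
Proof. unfold ybar2, ybar3; pose proof (sqrt_pos (Defs.sigma s g u)); lra. Qed.

Lemma ybar2_add_ybar3 s g u : ybar2 s g u + ybar3 s g u = 1 + s / g.
Proof. unfold ybar2, ybar3; lra. Qed.

Lemma Fvec_ybar s g u x : 0 < g -> 0 <= Defs.sigma s g u ->
  Fvec s g u x = (1 - x) * (g * (x - ybar2 s g u) * (x - ybar3 s g u)).
Proof. intros Hg Hsig; now rewrite Fvec_quadratic, quadratic_ybar. Qed.

Lemma regular_zero_ybar1 s g u : regular_zero (Fvec s g u) ybar1.
Proof. apply Fvec_regular_zero; unfold Fvec, ybar1; ring. Qed.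

Lemma regular_zero_ybar2 s g u : 0 < g -> 0 <= Defs.sigma s g u ->
  regular_zero (Fvec s g u) (ybar2 s g u).
Proof. intros Hg Hsig; apply Fvec_regular_zero; rewrite Fvec_ybar by assumption; ring. Qed.

Lemma regular_zero_ybar3 s g u : 0 < g -> 0 <= Defs.sigma s g u ->
  regular_zero (Fvec s g u) (ybar3 s g u).
Proof. intros Hg Hsig; apply Fvec_regular_zero; rewrite Fvec_ybar by assumption; ring. Qed.

Lemma sub1_ybar_mul s g u : 0 < g -> 0 <= Defs.sigma s g u ->
  g * (1 - ybar2 s g u) * (1 - ybar3 s g u) = u - s.
Proof.
  intros Hg Hsig; rewrite <- (quadratic_ybar s g u 1 Hg Hsig); ring.
Qed.

Section FvecSign.

Variables (s g u x : R).
Hypothesis g_pos : 0 < g.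
Hypothesis sigma_nonneg : 0 <= Defs.sigma s g u.
Hypothesis x_lt1 : x < 1.

Lemma Fvec_pos_below : x < ybar2 s g u -> 0 < Fvec s g u x.
Proof.
  intros Hx; rewrite Fvec_ybar, Rmult_assoc by assumption.
  pose proof (ybar2_le_ybar3 s g u).
  apply Rmult_lt_0_compat; [lra |]; apply Rmult_lt_0_compat; [lra | nra].
Qed.

Lemma Fvec_neg_between : ybar2 s g u < x < ybar3 s g u -> Fvec s g u x < 0.
Proof.
  intros Hx; rewrite Fvec_ybar, Rmult_assoc by assumption.
  assert ((x - ybar2 s g u) * (x - ybar3 s g u) < 0) by nra.
  assert (g * ((x - ybar2 s g u) * (x - ybar3 s g u)) < 0) by nra.
  nra.
Qed.

Lemma Fvec_pos_above : ybar3 s g u < x -> 0 < Fvec s g u x.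
Proof.
  intros Hx; rewrite Fvec_ybar, Rmult_assoc by assumption.
  pose proof (ybar2_le_ybar3 s g u).
  apply Rmult_lt_0_compat; [lra |]; apply Rmult_lt_0_compat; [lra | nra].
Qed.

End FvecSign.

Lemma has_yinf_u_le_s s g u y0 y : 0 < g -> u <= s -> is_solution s g u y0 y ->
  (y0 < 1 -> has_yinf y (ybar2 s g u)) /\ (y0 = 1 -> has_yinf y ybar1).
Proof.
  intros Hg Hus Hy.
  assert (Hsig : 0 <= Defs.sigma s g u).
  { replace (Defs.sigma s g u) with ((1 - s / g) ^ 2 + 4 * ((s - u) / g))
      by (unfold Defs.sigma; field; lra).
    pose proof (pow2_ge_0 (1 - s / g)).
    assert (0 <= (s - u) / g) by (apply Rdiv_le_0_compat; lra); lra. }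
  assert (H1 := sub1_ybar_mul s g u Hg Hsig).
  assert (H23 := ybar2_le_ybar3 s g u).
  assert ((1 - ybar2 s g u) * (1 - ybar3 s g u) <= 0) by nra.
  assert (ybar2 s g u <= 1 <= ybar3 s g u) by (split; nra).
  split; intros Hy0.
  - destruct (Rle_dec y0 (ybar2 s g u)).
    + apply (is_lim_sol_up_from_below _ _ _ Hy); [now apply regular_zero_ybar2 | | lra].
      intros x Hx; apply Fvec_pos_below; lra.
    + apply (is_lim_sol_down _ _ _ Hy _ ybar1);
        [now apply regular_zero_ybar2 | apply regular_zero_ybar1 | | unfold ybar1; lra].
      intros x Hx; unfold ybar1 in Hx; apply Fvec_neg_between; lra.
  - apply (is_lim_sol_zero _ _ _ Hy ybar1); [apply regular_zero_ybar1 | exact Hy0].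
Qed.

Lemma has_yinf_s_lt_u s g u y0 y : 0 < g -> s < g -> s < u -> u <= ucheck s g ->
  is_solution s g u y0 y -> y0 <= 1 ->
  (y0 < ybar3 s g u -> has_yinf y (ybar2 s g u)) /\
  (y0 = ybar3 s g u -> has_yinf y (ybar3 s g u)) /\
  (ybar3 s g u < y0 -> has_yinf y ybar1).
Proof.
  intros Hg Hsg Hsu Huc Hy Hy1.
  assert (Hsig : 0 <= Defs.sigma s g u).
  { rewrite sigma_ucheck by assumption.
    apply Rmult_le_pos; [apply Rlt_le, Rdiv_lt_0_compat |]; lra. }
  assert (H1 := sub1_ybar_mul s g u Hg Hsig).
  assert (H23 := ybar2_le_ybar3 s g u).
  assert (Hsum := ybar2_add_ybar3 s g u).
  assert (g * (s / g) = s) by (field; lra).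
  assert (s / g < 1) by nra.
  assert (0 < (1 - ybar2 s g u) * (1 - ybar3 s g u)) by nra.
  assert (ybar3 s g u < 1) by nra.
  split; [| split]; intros Hy0.
  - destruct (Rle_dec y0 (ybar2 s g u)).
    + apply (is_lim_sol_up_from_below _ _ _ Hy); [now apply regular_zero_ybar2 | | lra].
      intros x Hx; apply Fvec_pos_below; lra.
    + apply (is_lim_sol_down _ _ _ Hy _ (ybar3 s g u));
        [now apply regular_zero_ybar2 | now apply regular_zero_ybar3 | | lra].
      intros x Hx; apply Fvec_neg_between; lra.
  - apply (is_lim_sol_zero _ _ _ Hy); [now apply regular_zero_ybar3 | exact Hy0].
  - apply (is_lim_sol_up _ _ _ Hy (ybar3 s g u));
      [now apply regular_zero_ybar3 | apply regular_zero_ybar1 | | unfold ybar1; lra].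
    intros x Hx; unfold ybar1 in Hx; apply Fvec_pos_above; lra.
Qed.

Lemma quadratic_pos_below1 s g u x : 0 < g ->
  (ucheck s g < u \/ (g <= s /\ s <= u)) -> x < 1 -> 0 < g * x ^ 2 - (s + g) * x + u.
Proof.
  intros Hg Hc Hx; destruct Hc as [Huc | [Hgs Hsu]].
  - replace (g * x ^ 2 - (s + g) * x + u)
      with (g * (x - (s + g) / (2 * g)) ^ 2 + (u - ucheck s g))
      by (unfold ucheck; field; lra).
    pose proof (pow2_ge_0 (x - (s + g) / (2 * g))); nra.
  - replace (g * x ^ 2 - (s + g) * x + u) with ((1 - x) * (s - g * x) + (u - s))
      by ring.
    assert (0 < (1 - x) * (s - g * x)) by (apply Rmult_lt_0_compat; nra); lra.
Qed.

Lemma has_yinf_ybar1 s g u y0 y : 0 < g ->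
  (ucheck s g < u \/ (g <= s /\ s <= u)) ->
  is_solution s g u y0 y -> y0 <= 1 -> has_yinf y ybar1.
Proof.
  intros Hg Hc Hy Hy1.
  apply (is_lim_sol_up_from_below _ _ _ Hy); [apply regular_zero_ybar1 | | exact Hy1].
  intros x Hx; unfold ybar1 in Hx; rewrite Fvec_quadratic.
  apply Rmult_lt_0_compat; [lra | now apply quadratic_pos_below1].
Qed.

Theorem corollary2p4 (s gamma u : R) (hs : 0 < s) (hg : 0 < gamma) (hu : 0 < u) :
  ((u < s \/ (u = s /\ s < gamma)) ->
     forall (y0 : R) (y : R -> R), 0 <= y0 <= 1 -> is_solution s gamma u y0 y ->
       (y0 < 1 -> has_yinf y (ybar2 s gamma u)) /\
       (y0 = 1 -> has_yinf y ybar1))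
  /\
  ((s < gamma /\ s < u /\ u <= ucheck s gamma) ->
     forall (y0 : R) (y : R -> R), 0 <= y0 <= 1 -> is_solution s gamma u y0 y ->
       (y0 < ybar3 s gamma u -> has_yinf y (ybar2 s gamma u)) /\
       (y0 = ybar3 s gamma u -> has_yinf y (ybar3 s gamma u)) /\
       (ybar3 s gamma u < y0 -> has_yinf y ybar1))
  /\
  ((ucheck s gamma < u \/ (gamma <= s /\ s <= u /\ u <= ucheck s gamma)) ->
     forall (y0 : R) (y : R -> R), 0 <= y0 <= 1 -> is_solution s gamma u y0 y ->
       has_yinf y ybar1).
Proof.
  split; [| split].
  - intros Hc y0 y _ Hy; apply has_yinf_u_le_s; [lra | lra | exact Hy].
  - intros (Hsg & Hsu & Huc) y0 y Hy0 Hy; apply has_yinf_s_lt_u; auto; lra.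
  - intros Hc y0 y Hy0 Hy.
    apply (has_yinf_ybar1 s gamma u y0); [lra | lra | exact Hy | lra].
Qed.
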